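(* Let $\tilde f>0$, $\tilde\vartheta>0$ satisfy $\tilde f/\tilde\vartheta>D/V$, and define $\tilde\sigma(\mathbf{x})=\mathbb{I}(\rho(\mathbf{x})>0)\,\tilde f+\frac{\tilde f}{\xi\tilde\vartheta}\theta(\mathbf{x})$ and $\tilde\pi(\mathbf{x})=-(f(\mathbf{x})+\tilde\sigma(\mathbf{x}))$. For all $\mathbf{x}_1,\mathbf{x}_2\in S$, with $y=f(\mathbf{x}_1)-f(\mathbf{x}_2)$ and $z=\theta(\mathbf{x}_1)-\theta(\mathbf{x}_2)$: (i) if one of (A1)–(A4) holds, then $\tilde\pi(\mathbf{x}_1)>\tilde\pi(\mathbf{x}_2)$; (ii) if one of (B1)–(B4) holds, then $\tilde\pi(\mathbf{x}_1)<\tilde\pi(\mathbf{x}_2)$. Here (A1) $-2V\le z<-V$; (A2) $-V\le z<-\xi V$; (A3) $-\xi V\le z<-\xi\eta V$ and $-D\le y\le\eta D$; (A4) $-\xi\eta V\le z\le0$, $-D\le y\le0$, $(y,z)\ne(0,0)$; (B1) $V<z\le2V$; (B2) $\xi V<z\le V$; (B3) $\xi\eta V<z\le\xi V$ and $-\eta D\le y\le D$; (B4) $0\le z\le\xi\eta V$, $0\le y\le D$, $(y,z)\ne(0,0)$.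
   Context: Let $S\subset\mathbb{R}^k$ be a compact box, $f,g_1,\dots,g_m,h_{m+1},\dots,h_n:S\to\mathbb{R}$ continuous, $\delta>0$. Put $v_i(\mathbf{x})=\max\{g_i(\mathbf{x}),0\}$ ($i\le m$), $v_i(\mathbf{x})=\max\{|h_i(\mathbf{x})|-\delta,0\}$ ($m<i\le n$), $\vartheta(\mathbf{x})=\sum_{i=1}^n v_i(\mathbf{x})$; $\mathbf{x}$ is feasible iff $\vartheta(\mathbf{x})=0$. Let $D=\max_S f-\min_S f$ and $V=\max_S\vartheta$, and assume $D>0$, $V>0$. Define $\theta(\mathbf{x})=-V$ if $\vartheta(\mathbf{x})=0$ and $\theta(\mathbf{x})=\vartheta(\mathbf{x})$ otherwise. Let $\rho(\mathbf{x})=\#\{i: v_i(\mathbf{x})>0\}$ and $\mathbb{I}(\rho(\mathbf{x})>0)$ be $1$ if $\rho(\mathbf{x})>0$ and $0$ otherwise. Fix parameters $0<\eta<1$ and $0<\xi\le 1$. *)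

From HB Require Import structures.
From mathcomp Require Import all_boot all_order all_algebra.
From mathcomp Require Import all_classical all_reals all_analysis.
Set Implicit Arguments. Unset Strict Implicit. Unset Printing Implicit Defensive.
Import Order.TTheory GRing.Theory Num.Theory.
Import numFieldNormedType.Exports.
Local Open Scope classical_set_scope.
Local Open Scope ring_scope.

Section Defs.
Variable R : realType.
Variable k : nat.

Definition box (a b : 'rV[R]_k) : set 'rV[R]_k :=
  [set x | forall i : 'I_k, a ord0 i <= x ord0 i <= b ord0 i].

Definition is_max_on (S : set 'rV[R]_k) (F : 'rV[R]_k -> R) (M : R) :=
  (exists2 x, S x & F x = M) /\ (forall x, S x -> F x <= M).
Definition is_min_on (S : set 'rV[R]_k) (F : 'rV[R]_k -> R) (M : R) :=
  (exists2 x, S x & F x = M) /\ (forall x, S x -> M <= F x).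

Variables (m p : nat).
(* inequality constraints g_1..g_m, equality constraints h_{m+1}..h_{m+p} (n = m+p) *)
Variable g : 'I_m -> 'rV[R]_k -> R.
Variable h : 'I_p -> 'rV[R]_k -> R.
Variable delta : R.

Definition vg (i : 'I_m) (x : 'rV[R]_k) : R := Num.max (g i x) 0.
Definition vh (j : 'I_p) (x : 'rV[R]_k) : R := Num.max (`|h j x| - delta) 0.

Definition viol (x : 'rV[R]_k) : R :=
  \sum_(i < m) vg i x + \sum_(j < p) vh j x.

Definition rho (x : 'rV[R]_k) : nat :=
  #|[set i : 'I_m | 0 < vg i x]| + #|[set j : 'I_p | 0 < vh j x]|.

Definition theta (V : R) (x : 'rV[R]_k) : R :=
  if viol x == 0 then - V else viol x.

Definition ind_rho (x : 'rV[R]_k) : R := if (0 < rho x)%N then 1 else 0.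

Definition sigma_t (V ft vt xi : R) (x : 'rV[R]_k) : R :=
  ind_rho x * ft + ft / (xi * vt) * theta V x.

Definition pi_t (f : 'rV[R]_k -> R) (V ft vt xi : R) (x : 'rV[R]_k) : R :=
  - (f x + sigma_t V ft vt xi x).
End Defs.

From Pilot Require Import Defs.
From HB Require Import structures.
From mathcomp Require Import all_boot all_order all_algebra.
From mathcomp Require Import all_classical all_reals all_analysis.
From mathcomp Require Import ring lra.
Set Implicit Arguments. Unset Strict Implicit. Unset Printing Implicit Defensive.
Import Order.TTheory GRing.Theory Num.Theory.
Import numFieldNormedType.Exports.
Local Open Scope classical_set_scope.
Local Open Scope ring_scope.

(* With [c := ft / (xi * vt)] we have [pi_t = - (f + ind_rho * ft + c * theta)],
   and [ft / vt > D / V] means [c * (xi * V) > D]: a drop of [xi * V] in [theta]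
   outweighs any change of [f] on [S].  In the regions (A1)-(A4) one therefore
   gets [y + c * z < 0] with [z <= 0]; the indicator term can only help, since
   [theta] is [-V < 0] on feasible points and positive elsewhere, so
   [ind_rho] is monotone in [theta].  The regions (B1)-(B4) are (A1)-(A4) with
   [x1] and [x2] exchanged. *)

Lemma card_pos_gt0 (R : realDomainType) (I : finType) (F : I -> R) :
  (forall i, 0 <= F i) -> (0 < #|[set i : I | (0 < F i)%R]|)%N = (\sum_i F i != 0).
Proof.
move=> F_ge0; rewrite psumr_neq0 //.
apply/card_gt0P/hasP => [[i]|[i _]]; rewrite ?in_setE => Fi_gt0.
  by exists i; rewrite ?mem_index_enum.
by exists i; rewrite in_setE.
Qed.

Lemma max_sub_min_ge (R : realDomainType) (T : Type) (S : set T) (F : T -> R)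
    (M mu : R) (x1 x2 : T) : S x1 -> S x2 ->
  (forall x, S x -> F x <= M) -> (forall x, S x -> mu <= F x) ->
  F x1 - F x2 <= M - mu.
Proof. by move=> Sx1 Sx2 /(_ _ Sx1) ? /(_ _ Sx2) ?; lra. Qed.

Section Penalty.
Variables (R : realType) (k m p : nat).
Variables (g : 'I_m -> 'rV[R]_k -> R) (h : 'I_p -> 'rV[R]_k -> R) (delta : R).

Local Notation viol := (viol g h delta).
Local Notation ind_rho := (ind_rho g h delta).

Lemma vg_ge0 i x : 0 <= vg g i x. Proof. by rewrite le_max lexx orbT. Qed.

Lemma vh_ge0 j x : 0 <= vh h delta j x. Proof. by rewrite le_max lexx orbT. Qed.

Lemma rho_gt0 x : (0 < rho g h delta x)%N = (viol x != 0).
Proof.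
have sum_vg_ge0 : 0 <= \sum_(i < m) vg g i x by apply: sumr_ge0 => *; apply: vg_ge0.
have sum_vh_ge0 : 0 <= \sum_(j < p) vh h delta j x by apply: sumr_ge0 => *; apply: vh_ge0.
rewrite /rho /viol addn_gt0 paddr_eq0 // negb_and.
by rewrite !card_pos_gt0 // => *; [apply: vh_ge0|apply: vg_ge0].
Qed.

Lemma ind_rhoE x : ind_rho x = (viol x != 0)%:R.
Proof. by rewrite /Defs.ind_rho rho_gt0; case: (viol x != 0). Qed.

Lemma ind_rho_le (V : R) x1 x2 : 0 <= V ->
  theta g h delta V x1 <= theta g h delta V x2 -> ind_rho x1 <= ind_rho x2.
Proof.
rewrite /theta !ind_rhoE => V_ge0.
have [_|viol1_neq0] := eqVneq (viol x1) 0; first by rewrite ler0n.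
have [_|//] := eqVneq (viol x2) 0.
have viol1_gt0 : 0 < viol x1.
  by rewrite lt0r viol1_neq0 addr_ge0 ?sumr_ge0 // => *; [apply: vg_ge0|apply: vh_ge0].
lra.
Qed.

Lemma pi_t_lt (f : 'rV[R]_k -> R) (V ft vt xi : R) x1 x2 : 0 <= V -> 0 <= ft ->
  f x1 - f x2 + ft / (xi * vt) * (theta g h delta V x1 - theta g h delta V x2) < 0 ->
  theta g h delta V x1 <= theta g h delta V x2 ->
  pi_t g h delta f V ft vt xi x2 < pi_t g h delta f V ft vt xi x1.
Proof.
move=> V_ge0 ft_ge0 + th_le; rewrite /pi_t /sigma_t mulrBr.
have : ind_rho x1 * ft <= ind_rho x2 * ft.
  by rewrite ler_wpM2r // (ind_rho_le V_ge0 th_le).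
lra.
Qed.

End Penalty.

Definition improving (R : realDomainType) (D V xi eta y z : R) : Prop :=
     (- (2 * V) <= z < - V)
  \/ (- V <= z < - (xi * V))
  \/ ((- (xi * V) <= z < - (xi * eta * V)) /\ (- D <= y <= eta * D))
  \/ ((- (xi * eta * V) <= z <= 0) /\ (- D <= y <= 0) /\ (y, z) <> (0, 0)).

Lemma improving_descent (R : realFieldType) (D V xi eta c y z : R) :
    0 < c -> 0 < V -> 0 < eta -> 0 <= xi <= 1 -> y <= D -> D < c * (xi * V) ->
  improving D V xi eta y z -> y + c * z < 0 /\ z <= 0.
Proof.
move=> c_gt0 V_gt0 eta_gt0 /andP[xi_ge0 xi_le1] y_le D_lt.
have xiV_ge0 : 0 <= xi * V by exact: mulr_ge0 xi_ge0 (ltW V_gt0).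
have xiV_le : xi * V <= V by exact: ler_piMl (ltW V_gt0) xi_le1.
have far (z' : R) : z' < - (xi * V) -> y + c * z' < 0.
  move=> z'_lt; have : c * z' < c * - (xi * V) by rewrite ltr_pM2l.
  by rewrite mulrN; lra.
case=> [/andP[_ z_lt]|[/andP[_ z_lt]|[[/andP[_ z_lt] /andP[_ y_le']]|]]].
- by split; [apply: far|]; lra.
- by split; [apply: far|]; lra.
- have : c * z < c * - (xi * eta * V) by rewrite ltr_pM2l.
  have : eta * D < eta * (c * (xi * V)) by rewrite ltr_pM2l.
  have -> : c * - (xi * eta * V) = - (eta * (c * (xi * V))) by ring.
  have : 0 <= xi * eta * V by exact: mulr_ge0 (mulr_ge0 xi_ge0 (ltW eta_gt0)) (ltW V_gt0).
  split; lra.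
move=> [/andP[_ z_le0] [/andP[_ y_le0] yz_neq0]].
split=> //; have cz_le0 : c * z <= 0 by rewrite pmulr_rle0.
rewrite ltNge; apply: contra_notN yz_neq0 => sum_ge0.
have -> : y = 0 by lra.
have /eqP : c * z = 0 by lra.
by rewrite mulf_eq0 gt_eqF //= => /eqP->.
Qed.

Lemma improving_opp (R : realDomainType) (D V xi eta y z : R) :
  (  (V < z <= 2 * V)
  \/ (xi * V < z <= V)
  \/ ((xi * eta * V < z <= xi * V) /\ (- (eta * D) <= y <= D))
  \/ ((0 <= z <= xi * eta * V) /\ (0 <= y <= D) /\ (y, z) <> (0, 0))) ->
  improving D V xi eta (- y) (- z).
Proof.
case=> [/andP[? ?]|[/andP[? ?]|[[/andP[? ?] /andP[? ?]]|[/andP[? ?] [/andP[? ?] yz_neq0]]]]].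
- by left; apply/andP; split; lra.
- by right; left; apply/andP; split; lra.
- by do 2 right; left; split; apply/andP; split; lra.
do 3 right; split; first by apply/andP; split; lra.
split; first by apply/andP; split; lra.
by case=> /eqP; rewrite oppr_eq0 => /eqP y0 /eqP; rewrite oppr_eq0 => /eqP z0; apply: yz_neq0; rewrite y0 z0.
Qed.

Theorem mainTheorem8 (R : realType) (k : nat) (a b : 'rV[R]_k)
  (hab : forall i : 'I_k, a ord0 i <= b ord0 i)
  (m p : nat) (f : 'rV[R]_k -> R) (g : 'I_m -> 'rV[R]_k -> R)
  (h : 'I_p -> 'rV[R]_k -> R) (delta : R) (hdelta : 0 < delta)
  (hf : {within box a b, continuous f})
  (hg : forall i, {within box a b, continuous (g i)})
  (hh : forall j, {within box a b, continuous (h j)})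
  (D V : R)
  (HD : exists Mf mf, is_max_on (box a b) f Mf /\ is_min_on (box a b) f mf /\ D = Mf - mf)
  (HV : is_max_on (box a b) (viol g h delta) V)
  (HDpos : 0 < D) (HVpos : 0 < V)
  (eta xi : R) (heta : 0 < eta < 1) (hxi : 0 < xi <= 1)
  (ft vt : R) (hft : 0 < ft) (hvt : 0 < vt) (hratio : D / V < ft / vt) :
  forall x1 x2 : 'rV[R]_k, box a b x1 -> box a b x2 ->
  let th := theta g h delta V in
  let pit := pi_t g h delta f V ft vt xi in
  let y := f x1 - f x2 in
  let z := th x1 - th x2 in
  ((  (- (2 * V) <= z < - V)
   \/ (- V <= z < - (xi * V))
   \/ ((- (xi * V) <= z < - (xi * eta * V)) /\ (- D <= y <= eta * D))
   \/ ((- (xi * eta * V) <= z <= 0) /\ (- D <= y <= 0) /\ (y, z) <> (0, 0)))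
   -> pit x1 > pit x2)
  /\
  ((  (V < z <= 2 * V)
   \/ (xi * V < z <= V)
   \/ ((xi * eta * V < z <= xi * V) /\ (- (eta * D) <= y <= D))
   \/ ((0 <= z <= xi * eta * V) /\ (0 <= y <= D) /\ (y, z) <> (0, 0)))
   -> pit x1 < pit x2).
Proof.
move=> x1 x2 Sx1 Sx2 th pit y z.
have [Mf [mf [f_max [f_min D_def]]]] := HD.
have [/andP[xi_gt0 xi_le1] /andP[eta_gt0 _]] := (hxi, heta).
have xi_bounds : 0 <= xi <= 1 by rewrite ltW.
set c := ft / (xi * vt).
have c_gt0 : 0 < c by rewrite divr_gt0 ?mulr_gt0.
have D_lt : D < c * (xi * V).
  have -> : c * (xi * V) = ft / vt * V by rewrite /c; field; rewrite !gt_eqF.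
  by rewrite -ltr_pdivrMr.
have descend u v : box a b u -> box a b v ->
    improving D V xi eta (f u - f v) (th u - th v) -> pit v < pit u.
  move=> Su Sv; have osc := max_sub_min_ge Su Sv f_max.2 f_min.2.
  rewrite -D_def in osc.
  case/(improving_descent c_gt0 HVpos eta_gt0 xi_bounds osc D_lt) => descent z_le0.
  by apply: pi_t_lt; rewrite ?(ltW HVpos) ?(ltW hft) // -subr_le0.
split=> [/descend|/improving_opp]; first exact.
by rewrite !opprB => /descend; apply.
Qed.
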